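(* Let $\mathcal{M}=\langle M,\circ,e\rangle$ be an mge monoid and let $\langle m_1,\dots,m_l\rangle,\langle n_1,\dots,n_l\rangle\in M^l$ have a joint equalizer. Then every mge for $\langle m_1,\dots,m_l\rangle$ is an mge for $\langle n_1,\dots,n_l\rangle$ and vice versa. Furthermore $Eq^{(l)}(m_1,\dots,m_l)=Eq^{(l)}(n_1,\dots,n_l)$.
   Context: In a monoid $\langle M,\circ,e\rangle$, a tuple $\langle m_1,\dots,m_n\rangle\in M^n$ is equalizable if there is $\langle x_1,\dots,x_n\rangle\in M^n$ (an equalizer) with $m_1x_1=\dots=m_nx_n$; $Eq^{(n)}(m_1,\dots,m_n)\subseteq M^n$ denotes the set of all equalizers of $\langle m_1,\dots,m_n\rangle$. An equalizer is a most general equalizer (mge) if every equalizer has the form $\langle x_1x,\dots,x_nx\rangle$ for some $x\in M$. An mge monoid is a monoid with right cancellation ($ac=bc\Rightarrow a=b$) in which every equalizable pair has an mge. A tuple $\langle x_1,\dots,x_n\rangle$ is a joint equalizer for $\langle m_1,\dots,m_n\rangle$ and $\langle m'_1,\dots,m'_n\rangle$ if it is an equalizer for both (it is not required that $m_ix_i=m'_ix_i$). *)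

From mathcomp Require Import all_boot.
Set Implicit Arguments. Unset Strict Implicit. Unset Printing Implicit Defensive.

Record monoid := Monoid {
  carrier :> Type;
  mop : carrier -> carrier -> carrier;
  munit : carrier;
  mopA : forall a b c, mop a (mop b c) = mop (mop a b) c;
  mop1l : forall a, mop munit a = a;
  mop1r : forall a, mop a munit = a }.

Section Defs.
Variable M : monoid.
Local Notation "a * b" := (mop a b).

Definition equalizer (n : nat) (m x : 'I_n -> M) : Prop :=
  forall i j : 'I_n, m i * x i = m j * x j.


Definition equalizable (n : nat) (m : 'I_n -> M) : Prop :=
  exists x, equalizer m x.

Definition mge (n : nat) (m x : 'I_n -> M) : Prop :=
  equalizer m x /\
  forall y : 'I_n -> M, equalizer m y -> exists z : M, forall i, y i = x i * z.

Definition right_cancellative : Prop :=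
  forall a b c : M, a * c = b * c -> a = b.

Definition pair2 (a b : M) : 'I_2 -> M := fun i => if val i == 0 then a else b.

Definition mge_monoid : Prop :=
  right_cancellative /\
  forall a b : M, equalizable (pair2 a b) -> exists x, mge (pair2 a b) x.

Definition Eqset (n : nat) (m : 'I_n -> M) : ('I_n -> M) -> Prop := fun x => equalizer m x.

Definition joint_equalizer (n : nat) (m m' x : 'I_n -> M) : Prop :=
  equalizer m x /\ equalizer m' x.
End Defs.

From mathcomp Require Import all_boot.

(* It suffices to treat pairs, component by component. If
   <p, q> equalizes both <a, b> and <c, d>, and <u0, u1> is an mge of <a, b>,
   then <p, q> = <u0 z, u1 z>, so c u0 z = d u1 z and right cancellation gives
   c u0 = d u1; every equalizer <u0 w, u1 w> of <a, b> then equalizes <c, d>.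
   Hence m and n have the same equalizers, and an mge is determined by the set
   of equalizers alone. *)

Set Implicit Arguments.

Section Equalizers.
Variable M : monoid.
Local Notation "a * b" := (mop a b).

Lemma equalizer_pair2 {a b x y : M} :
  a * x = b * y -> equalizer (pair2 a b) (pair2 x y).
Proof. by move=> axby [[|[|?]] ?] [[|[|?]] ?]; rewrite /pair2 //= axby. Qed.

Lemma mge_eq_equalizers (l : nat) (m n x : 'I_l -> M) :
  (forall y, equalizer m y <-> equalizer n y) -> mge m x -> mge n x.
Proof.
move=> Emn [/Emn eq_nx most_general]; split=> // y /Emn.
exact: most_general.
Qed.

Lemma equalizer_pair2_transfer (a b c d p q y0 y1 : M) (u : 'I_2 -> M) :
  right_cancellative M -> mge (pair2 a b) u ->
  a * p = b * q -> c * p = d * q -> a * y0 = b * y1 -> c * y0 = d * y1.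
Proof.
move=> rcM [_ most_general] abpq cdpq aby.
have factor x0 x1 : a * x0 = b * x1 ->
    exists z, x0 = u ord0 * z /\ x1 = u ord_max * z.
  move=> abx; have [z xz] := most_general _ (equalizer_pair2 abx).
  by exists z; split; [exact: (xz ord0) | exact: (xz ord_max)].
have [z [pz qz]] := factor _ _ abpq.
have [w [yw0 yw1]] := factor _ _ aby.
have cdu : c * u ord0 = d * u ord_max.
  by apply: (rcM _ _ z); rewrite -!mopA -pz -qz.
by rewrite yw0 yw1 !mopA cdu.
Qed.

Lemma joint_equalizer_transfer (l : nat) (m n x y : 'I_l -> M) :
  mge_monoid M -> joint_equalizer m n x -> equalizer m y -> equalizer n y.
Proof.
move=> [rcM mgeM] [mx nx] my i j.
have [u mge_u] := mgeM _ _ (ex_intro _ _ (equalizer_pair2 (mx i j))).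
exact: equalizer_pair2_transfer rcM mge_u (mx i j) (nx i j) (my i j).
Qed.

End Equalizers.

Theorem lemma3 (M : monoid) (l : nat) (m n : 'I_l -> M) :
  mge_monoid M ->
  (exists x, joint_equalizer m n x) ->
  (forall x, mge m x -> mge n x) /\
  (forall x, mge n x -> mge m x) /\
  (forall x, Eqset m x <-> Eqset n x).
Proof.
move=> mgeM [x [mx nx]].
have Emn y : equalizer m y <-> equalizer n y.
  by split; apply: joint_equalizer_transfer mgeM _;
    [exact: conj mx nx | exact: conj nx mx].
have Enm y := iff_sym (Emn y).
by split; [|split; last exact: Emn] => x'; apply: mge_eq_equalizers.
Qed.
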